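(* Let $\mathbb{A}\colon\mathbb{R}^d\to\mathbb{R}^d$ be Lipschitz continuous and monotone, $T>0$, $X_0\in\mathbb{R}^d$, and let $(X,Z)\in\mathcal{C}^1([0,T),\mathbb{R}^{2d})$ be the (unique) solution of \[ \dot X(t)=-Z(t)-\mathbb{A}(X(t)),\qquad \dot Z(t)=-\frac{1}{T-t}Z(t)-\frac{1}{T-t}\mathbb{A}(X(t)),\qquad X(0)=X_0,\ Z(0)=0. \] Then $\Psi(t)=\frac{1}{(T-t)^2}\|\dot X(t)\|^2$ is nonincreasing on $[0,T)$, and for all $t\in[0,T)$, \[ \|\dot Z(t)\|^2=\frac{1}{(T-t)^2}\|\dot X(t)\|^2\le\frac{1}{T^2}\|\mathbb{A}(X_0)\|^2. \]
   Context: Monotone: $\langle\mathbb{A}x-\mathbb{A}y,x-y\rangle\ge0$ for all $x,y$. *)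

From HB Require Import structures.
From mathcomp Require Import all_boot all_order all_algebra.
From mathcomp Require Import all_classical all_reals all_analysis.
Set Implicit Arguments. Unset Strict Implicit. Unset Printing Implicit Defensive.
Import Order.TTheory GRing.Theory Num.Theory.
Import numFieldNormedType.Exports.
Local Open Scope classical_set_scope.
Local Open Scope ring_scope.

Section Defs.
Variables (R : realType) (d : nat).

Definition edot (u v : 'rV[R]_d) : R := \sum_(i < d) u ord0 i * v ord0 i.
Definition enorm (u : 'rV[R]_d) : R := Num.sqrt (edot u u).

Definition lipschitz_op (A : 'rV[R]_d -> 'rV[R]_d) : Prop :=
  exists L : R, forall x y, enorm (A x - A y) <= L * enorm (x - y).

Definition monotone_op (A : 'rV[R]_d -> 'rV[R]_d) : Prop :=
  forall x y, 0 <= edot (A x - A y) (x - y).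

Definition Ico0 (T : R) : set R := [set s | 0 <= s /\ s < T].

(* f' is the derivative of f on [0,T), taken within [0,T) (one-sided at 0) *)
Definition has_deriv_on_Ico (T : R) (f f' : R -> 'rV[R]_d) : Prop :=
  forall t, Ico0 T t ->
    (fun s => (s - t)^-1 *: (f s - f t)) @ within (Ico0 T `\ t) (nbhs t)
      --> f' t.

Definition C1_on_Ico (T : R) (f f' : R -> 'rV[R]_d) : Prop :=
  has_deriv_on_Ico T f f' /\ {within Ico0 T, continuous f'}.

End Defs.

(* Along the flow Z' = X' / (T - t), so Psi = |Z'|^2.  Since A is only Lipschitz,
   Psi need not be differentiable, and we work with its difference quotients.
   With w the difference quotient of Z + A o X between t and s, the equations
   give exactly Z'(s) = Z'(t) - (s - t)/(T - s) w, hence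
     (Psi s - Psi t)/(s - t) = -2/(T - s) <Z'(t), w> + (s - t)/(T - s)^2 |w|^2.
   As s -> t, the Z-part of w tends to Z'(t), the A-part pairs nonnegatively with
   the difference quotient of X by monotonicity, and w stays bounded by Lipschitz
   continuity; so the upper Dini derivative of Psi is <= 0 on [0, T), and a
   supremum argument makes Psi nonincreasing.  Finally Psi(0) = |A X0|^2 / T^2
   because Z(0) = 0. *)

From HB Require Import structures.
From mathcomp Require Import all_boot all_order all_algebra.
From mathcomp Require Import all_classical all_reals all_analysis.
From mathcomp Require Import lra ring.
Set Implicit Arguments. Unset Strict Implicit. Unset Printing Implicit Defensive.
Import Order.TTheory GRing.Theory Num.Theory.
Import numFieldNormedType.Exports.
Local Open Scope classical_set_scope.
Local Open Scope ring_scope.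

Section EuclideanDot.
Variables (R : realType) (d : nat).
Implicit Types u v w : 'rV[R]_d.

Lemma edotC u v : edot u v = edot v u.
Proof. by apply: eq_bigr => i _; rewrite mulrC. Qed.

Lemma edotDl u v w : edot (u + v) w = edot u w + edot v w.
Proof. by rewrite /edot -big_split; apply: eq_bigr => i _; rewrite !mxE mulrDl. Qed.

Lemma edotDr u v w : edot w (u + v) = edot w u + edot w v.
Proof. by rewrite edotC edotDl !(edotC w). Qed.

Lemma edotZl (c : R) u v : edot (c *: u) v = c * edot u v.
Proof. by rewrite /edot mulr_sumr; apply: eq_bigr => i _; rewrite !mxE mulrA. Qed.

Lemma edotZr (c : R) u v : edot u (c *: v) = c * edot u v.
Proof. by rewrite edotC edotZl edotC. Qed.

Lemma edotBl u v w : edot (u - v) w = edot u w - edot v w.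
Proof. by rewrite edotDl -scaleN1r edotZl mulN1r. Qed.

Lemma edotBr u v w : edot w (u - v) = edot w u - edot w v.
Proof. by rewrite edotC edotBl !(edotC w). Qed.

Lemma edot_ge0 u : 0 <= edot u u.
Proof. by apply: sumr_ge0 => i _; rewrite -expr2 sqr_ge0. Qed.

Lemma enorm_sqr u : enorm u ^+ 2 = edot u u.
Proof. by rewrite sqr_sqrtr // edot_ge0. Qed.

Lemma edot_subZ u w (k : R) :
  edot (u - k *: w) (u - k *: w) = edot u u - 2 * k * edot u w + k ^+ 2 * edot w w.
Proof. by rewrite !(edotBl, edotBr, edotZl, edotZr) (edotC w u); ring. Qed.

Lemma normr_entry_le u i : `|u ord0 i| <= `|u|.
Proof.
rewrite [`|u|]mx_normrE.
exact: (le_bigmax _ (fun ij : 'I_1 * 'I_d => `|u ij.1 ij.2|) (ord0, i)).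
Qed.

(* [`|u|] is the max-entry norm, which induces the topology of ['rV_d]. *)
Lemma normr_edot_le u v : `|edot u v| <= d%:R * `|u| * `|v|.
Proof.
apply: (le_trans (ler_norm_sum _ _ _)).
apply: (@le_trans _ _ (\sum_(i < d) `|u| * `|v|)).
  by apply: ler_sum => i _; rewrite normrM ler_pM // normr_entry_le.
by rewrite sumr_const card_ord -mulrA mulr_natl.
Qed.

Lemma mx_norm_le_enorm u : `|u| <= enorm u.
Proof.
rewrite [`|u|]mx_normrE; apply: bigmax_le => [|[i j] _ /=]; first exact: sqrtr_ge0.
have -> : i = ord0 by apply/val_inj; case: i => [[]].
rewrite -sqrtr_sqr ler_sqrt ?edot_ge0 // /edot (bigD1 j) //= expr2 lerDl.
by apply: sumr_ge0 => k _; rewrite -expr2 sqr_ge0.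
Qed.

Lemma enorm_le_mx_norm u : enorm u <= d%:R * `|u|.
Proof.
have bound_ge0 : 0 <= d%:R * `|u| by rewrite mulr_ge0.
rewrite -(ger0_norm bound_ge0) -sqrtr_sqr ler_sqrt ?sqr_ge0 //.
apply: (@le_trans _ _ (d%:R * `|u| ^+ 2)).
  apply: (@le_trans _ _ (\sum_(i < d) `|u| ^+ 2)).
    apply: ler_sum => i _; rewrite -expr2 -real_normK ?num_real //.
    by rewrite lerXn2r ?nnegrE // normr_entry_le.
  by rewrite sumr_const card_ord mulr_natl.
rewrite exprMn ler_wpM2r ?sqr_ge0 //.
case: d => [|n]; first by rewrite expr2 mul0r.
by rewrite expr2 ler_peMl // ler1n.
Qed.

End EuclideanDot.

Definition diffq (R : realType) (V : lmodType R) (f : R -> V) (t s : R) : V :=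
  (s - t)^-1 *: (f s - f t).

Section MonotoneLipschitz.
Variables (R : realType) (d : nat) (A : 'rV[R]_d -> 'rV[R]_d).
Implicit Types (f : R -> 'rV[R]_d) (t s : R).

Lemma monotone_diffq_ge0 f t s :
  monotone_op A -> 0 <= edot (diffq f t s) (diffq (A \o f) t s).
Proof.
move=> monoA; rewrite /diffq edotZl edotZr mulrA edotC.
by apply: mulr_ge0; [rewrite -expr2 sqr_ge0 | exact: monoA].
Qed.

Lemma lipschitz_diffq_le (L : R) f t s :
  (forall x y, enorm (A x - A y) <= L * enorm (x - y)) -> 0 <= L ->
  `|diffq (A \o f) t s| <= L * d%:R * `|diffq f t s|.
Proof.
move=> lipA L_ge0; rewrite /diffq !normrZ mulrCA ler_wpM2l //=.
apply: (le_trans (mx_norm_le_enorm _)); apply: (le_trans (lipA _ _)).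
by rewrite -mulrA ler_wpM2l // enorm_le_mx_norm.
Qed.

End MonotoneLipschitz.

Section UpperDini.
Variable R : realType.
Implicit Types (D : set R) (f : R -> R) (a b t : R).

(* At [s = t] the quotient is [0 / 0 = 0], so that point needs no exclusion. *)
Definition upper_dini_le0 D f t :=
  forall eps, 0 < eps -> \forall s \near t, D s -> (f s - f t) / (s - t) <= eps.

Lemma near_diffq_le0 f t (P : set R) :
  (\forall s \near t, P s -> (f s - f t) / (s - t) <= 0) ->
  exists2 δ, 0 < δ & forall s, t - δ < s -> s < t + δ -> P s ->
    (s < t -> f t <= f s) /\ (t < s -> f s <= f t).
Proof.
move=> /nbhs_ballP[δ /= δ0 near_t]; exists δ => // s tδs stδ Ps.
have /near_t/(_ Ps) : ball t δ s by rewrite -ball_normE /= ltr_distlC tδs stδ.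
move=> q_le0; split=> st; move: q_le0.
  by rewrite ler_ndivrMr ?subr_lt0 // mul0r subr_ge0.
by rewrite ler_pdivrMr ?subr_gt0 // mul0r subr_le0.
Qed.

Lemma locally_nonincreasing_le f a b : a <= b ->
  (forall t, a <= t <= b ->
     \forall s \near t, a <= s <= b -> (f s - f t) / (s - t) <= 0) ->
  f b <= f a.
Proof.
move=> ab f_loc.
pose S := [set u | a <= u <= b /\ forall v, a <= v <= u -> f v <= f a].
have Sa : S a by split=> [|v /le_anti ->]; rewrite ?lexx ?ab.
have supS : has_sup S by split; [exists a | exists b => u [/andP[_ ->]]].
set m := sup S.
have am : a <= m := sup_upper_bound supS Sa.
have mb : m <= b by apply: ge_sup; [exists a | move=> u [/andP[_ ->]]].
have below_m v : a <= v -> v < m -> f v <= f a.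
  move=> av vm; have vm0 : 0 < m - v by rewrite subr_gt0.
  have [u [_ Su] mu] := sup_adherent vm0 supS.
  by apply: Su; rewrite av ltW //; rewrite -/m in mu; lra.
have amb : a <= m <= b by rewrite am mb.
have [δ δ0 near_m] := near_diffq_le0 (f_loc m amb).
have fm : f m <= f a.
  have [<- // | am'] := eqVneq a m.
  pose v := Num.max a (m - δ / 2).
  have vm : v < m by rewrite gt_max lt_neqAle am' am /=; lra.
  have av : a <= v by rewrite le_max lexx.
  have vδ : m - δ / 2 <= v by rewrite le_max lexx orbT.
  have vab : a <= v <= b by rewrite av (le_trans (ltW vm) mb).
  have [/(_ vm) fmv _] := near_m v ltac:(lra) ltac:(lra) vab.
  exact: le_trans fmv (below_m v av vm).
suff <- : m = b by [].
apply/eqP; rewrite eq_le mb leNgt; apply/negP => mb'.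
pose w := Num.min b (m + δ / 2).
have wb : w <= b by rewrite ge_min lexx.
have wδ : w <= m + δ / 2 by rewrite ge_min lexx orbT.
have mw : m < w by rewrite lt_min mb' /=; lra.
have Sw : S w.
  split=> [|v /andP[av vw]]; first by rewrite (le_trans am (ltW mw)) wb.
  have [vm | mv | -> //] := ltgtP v m; first exact: below_m.
  have vab : a <= v <= b by rewrite (le_trans am (ltW mv)) (le_trans vw wb).
  have [_ /(_ mv) fvm] := near_m v ltac:(lra) ltac:(lra) vab.
  exact: le_trans fvm fm.
by have := sup_upper_bound supS Sw; rewrite -/m leNgt mw.
Qed.

Lemma upper_dini_le0_le f a b : a <= b ->
  (forall t, a <= t <= b -> upper_dini_le0 [set s | a <= s <= b] f t) ->
  f b <= f a.
Proof.
move=> ab f_dini; apply/ler_addgt0Pr => e e0.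
pose k := e / (b - a + 1).
have k0 : 0 < k by rewrite divr_gt0 //; lra.
have kba : k * (b - a) <= e by rewrite mulrAC ler_pdivrMr; lra.
suff : f b - k * b <= f a - k * a by lra.
apply: (locally_nonincreasing_le (f := fun s => f s - k * s)) ab _ => t tab.
apply: filterS (f_dini t tab k k0) => s fs sab.
have [-> | st] := eqVneq s t; first by rewrite !subrr mul0r.
have -> : (f s - k * s - (f t - k * t)) / (s - t) = (f s - f t) / (s - t) - k.
  by field; rewrite subr_eq0.
by rewrite subr_le0 fs.
Qed.

End UpperDini.

Section Flow.
Variables (R : realType) (d : nat) (A : 'rV[R]_d -> 'rV[R]_d) (L T : R).
Variables (X Z X' Z' : R -> 'rV[R]_d).
Hypothesis L_ge0 : 0 <= L.
Hypothesis A_lipschitz : forall x y, enorm (A x - A y) <= L * enorm (x - y).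
Hypothesis A_monotone : monotone_op A.
Hypothesis X_deriv : has_deriv_on_Ico T X X'.
Hypothesis Z_deriv : has_deriv_on_Ico T Z Z'.
Hypothesis X'E : forall t, Ico0 T t -> X' t = - Z t - A (X t).
Hypothesis Z'E : forall t, Ico0 T t -> Z' t = (T - t)^-1 *: X' t.

Local Notation Ico_nbhs t := (within (Ico0 T `\ t) (nbhs t)).

(* (T - s) Z' s = X' s, and X' s - X' t = - (s - t) (diffq Z + diffq (A o X)). *)
Lemma Z'_shift t s : Ico0 T t -> Ico0 T s -> s != t ->
  Z' s = Z' t - ((s - t) / (T - s)) *: (diffq Z t s - Z' t + diffq (A \o X) t s).
Proof.
move=> It Is st; have [_ tT] := It; have [_ sT] := Is.
apply/rowP => i; rewrite !(Z'E, X'E) // /diffq !mxE /=.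
by field; rewrite !subr_eq0 st !gt_eqF.
Qed.

Let Zquot_err t s := diffq Z t s - Z' t.
Let Xquot_err t s := diffq X t s - X' t.
Let Aquot_bound t s := L * d%:R * `|diffq X t s|.
Let quot_bound t s :=
  2 / (T - s) * (d%:R * `|Z' t| * `|Zquot_err t s|
                 + d%:R * `|Xquot_err t s| * Aquot_bound t s / (T - t))
  + `|s - t| / (T - s) ^+ 2 * (d%:R * (`|Zquot_err t s| + Aquot_bound t s) ^+ 2).

Lemma diffq_edot_Z'_le t s : Ico0 T t -> Ico0 T s -> s != t ->
  (edot (Z' s) (Z' s) - edot (Z' t) (Z' t)) / (s - t) <= quot_bound t s.
Proof.
move=> It Is st; have [_ tT] := It; have [_ sT] := Is.
have Tt_gt0 : 0 < T - t by rewrite subr_gt0.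
have Ts_gt0 : 0 < T - s by rewrite subr_gt0.
rewrite (Z'_shift It Is st) edot_subZ.
set U := Z' t; set a := diffq (A \o X) t s; set w := _ + a.
have a_le : `|a| <= Aquot_bound t s by apply: lipschitz_diffq_le.
have Ua : - edot U a <= `|edot (Xquot_err t s) a| / (T - t).
  rewrite /U Z'E //.
  have -> : X' t = diffq X t s - Xquot_err t s by rewrite opprB addrC subrK.
  rewrite edotZl edotBl mulrC -mulNr ler_pM2r ?invr_gt0 //.
  have := monotone_diffq_ge0 X t s A_monotone; rewrite -/a.
  have := ler_norm (edot (Xquot_err t s) a); lra.
have Uw : - edot U w <=
    d%:R * `|U| * `|Zquot_err t s| + d%:R * `|Xquot_err t s| * Aquot_bound t s / (T - t).
  have ga : `|edot (Xquot_err t s) a| / (T - t) <=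
      d%:R * `|Xquot_err t s| * Aquot_bound t s / (T - t).
    rewrite ler_pM2r ?invr_gt0 // (le_trans (normr_edot_le _ _)) //.
    by rewrite ler_wpM2l // mulr_ge0.
  rewrite /w -/(Zquot_err t s) edotDr.
  have := normr_edot_le U (Zquot_err t s); have := ler_norm (- edot U (Zquot_err t s)).
  rewrite normrN; lra.
have ww : edot w w <= d%:R * (`|Zquot_err t s| + Aquot_bound t s) ^+ 2.
  apply: (le_trans (ler_norm _)); apply: (le_trans (normr_edot_le w w)).
  rewrite -mulrA ler_wpM2l // -expr2 lerXn2r ?nnegrE ?addr_ge0 //.
    exact: le_trans a_le.
  by rewrite /w -/(Zquot_err t s) (le_trans (ler_normD _ _)) // lerD2l.
have -> : (edot U U - 2 * ((s - t) / (T - s)) * edot U w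
            + ((s - t) / (T - s)) ^+ 2 * edot w w - edot U U) / (s - t)
          = 2 / (T - s) * (- edot U w) + (s - t) / (T - s) ^+ 2 * edot w w.
  by field; rewrite gt_eqF // subr_eq0 st.
rewrite /quot_bound; apply: lerD; first by rewrite ler_wpM2l // divr_ge0 // ltW.
apply: (@le_trans _ _ (`|s - t| / (T - s) ^+ 2 * edot w w)).
  by rewrite ler_wpM2r ?edot_ge0 // ler_pM2r ?invr_gt0 ?exprn_gt0 // ler_norm.
by rewrite ler_wpM2l // divr_ge0 // exprn_ge0 // ltW.
Qed.

Lemma quot_bound_cvg0 t : Ico0 T t ->
  quot_bound t s @[s --> Ico_nbhs t] --> 0.
Proof.
move=> It; have [_ tT] := It.
have s_t : s @[s --> Ico_nbhs t] --> t by apply: cvg_within.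
have Zerr0 : `|Zquot_err t s| @[s --> Ico_nbhs t] --> 0.
  apply/norm_cvg0P; rewrite -(subrr (Z' t)).
  exact: cvgB (Z_deriv It) (cvg_cst _).
have Xerr0 : `|Xquot_err t s| @[s --> Ico_nbhs t] --> 0.
  apply/norm_cvg0P; rewrite -(subrr (X' t)).
  exact: cvgB (X_deriv It) (cvg_cst _).
have Abound_cvg : Aquot_bound t s @[s --> Ico_nbhs t] --> L * d%:R * `|X' t|.
  exact: cvgM (cvg_cst _) (cvg_norm (X_deriv It)).
have dist0 : `|s - t| @[s --> Ico_nbhs t] --> 0.
  by apply/norm_cvg0P; rewrite -(subrr t); apply: cvgB s_t (cvg_cst _).
have Ts : T - s @[s --> Ico_nbhs t] --> T - t by apply: cvgB s_t; apply: cvg_cst.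
have Tt0 : T - t != 0 by rewrite subr_eq0 gt_eqF.
pose K := L * d%:R * `|X' t|.
have -> : 0 = 2 * (T - t)^-1 * (d%:R * `|Z' t| * 0 + d%:R * 0 * K * (T - t)^-1)
              + 0 * ((T - t) * (T - t))^-1 * (d%:R * ((0 + K) * (0 + K))).
  by rewrite !(mulr0, mul0r, addr0).
exact: cvgD (cvgM (cvgM (cvg_cst _) (cvgV Tt0 Ts))
               (cvgD (cvgM (cvg_cst _) Zerr0)
                     (cvgM (cvgM (cvgM (cvg_cst _) Xerr0) Abound_cvg) (cvg_cst _))))
            (cvgM (cvgM dist0 (cvgV (mulf_neq0 Tt0 Tt0) (cvgM Ts Ts)))
               (cvgM (cvg_cst _)
                  (cvgM (cvgD Zerr0 Abound_cvg) (cvgD Zerr0 Abound_cvg)))).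
Qed.

Lemma upper_dini_edot_Z' t : Ico0 T t ->
  upper_dini_le0 (Ico0 T) (fun u => edot (Z' u) (Z' u)) t.
Proof.
move=> It eps eps0.
have : \forall s \near Ico_nbhs t, quot_bound t s < eps.
  exact: cvgr_lt (quot_bound_cvg0 It) _ eps0.
rewrite near_withinE; apply: filterS => s bound_lt Is.
have [-> | st] := eqVneq s t; first by rewrite !subrr mul0r ltW.
apply: le_trans (ltW (bound_lt _)); first exact: diffq_edot_Z'_le.
by split=> // /= /eqP; apply/negP.
Qed.

Lemma edot_Z'_nonincreasing s t : 0 <= s -> s <= t -> t < T ->
  edot (Z' t) (Z' t) <= edot (Z' s) (Z' s).
Proof.
move=> s_ge0 st tT.
apply: (upper_dini_le0_le (f := fun u => edot (Z' u) (Z' u)) st).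
move=> u /andP[su ut] eps eps0.
have Iu : Ico0 T u by split; [exact: le_trans su | exact: le_lt_trans tT].
apply: filterS (upper_dini_edot_Z' Iu eps0) => v Hv /andP[sv vt]; apply: Hv.
by split; [exact: le_trans sv | exact: le_lt_trans tT].
Qed.

End Flow.

Theorem lemmaH3 (R : realType) (d : nat) (A : 'rV[R]_d -> 'rV[R]_d)
    (T : R) (X0 : 'rV[R]_d) (X Z X' Z' : R -> 'rV[R]_d) :
  lipschitz_op A -> monotone_op A -> 0 < T ->
  C1_on_Ico T X X' -> C1_on_Ico T Z Z' ->
  (forall t, Ico0 T t -> X' t = - Z t - A (X t)) ->
  (forall t, Ico0 T t ->
     Z' t = - (T - t)^-1 *: Z t - (T - t)^-1 *: A (X t)) ->
  X 0 = X0 -> Z 0 = 0 ->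
  (forall s t, 0 <= s -> s <= t -> t < T ->
     (T - t)^-2 * enorm (X' t) ^+ 2 <= (T - s)^-2 * enorm (X' s) ^+ 2) /\
  (forall t, Ico0 T t ->
     enorm (Z' t) ^+ 2 = (T - t)^-2 * enorm (X' t) ^+ 2 /\
     (T - t)^-2 * enorm (X' t) ^+ 2 <= T^-2 * enorm (A X0) ^+ 2).
Proof.
move=> [L A_lip] A_mono T_gt0 [X_deriv _] [Z_deriv _] X'E Z'_ode X0E Z0E.
have A_lip' x y : enorm (A x - A y) <= `|L| * enorm (x - y).
  by rewrite (le_trans (A_lip x y)) // ler_wpM2r ?sqrtr_ge0 ?ler_norm.
have Z'E t : Ico0 T t -> Z' t = (T - t)^-1 *: X' t.
  by move=> It; rewrite Z'_ode // X'E // scalerBr scaleNr scalerN.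
have PsiE t : Ico0 T t -> (T - t)^-2 * enorm (X' t) ^+ 2 = enorm (Z' t) ^+ 2.
  by move=> It; rewrite Z'E // !enorm_sqr edotZl edotZr mulrA -expr2 exprVn.
have Z'_mono :=
  edot_Z'_nonincreasing (normr_ge0 L) A_lip' A_mono X_deriv Z_deriv X'E Z'E.
have I0 : Ico0 T 0 by split.
split=> [s t s_ge0 st tT | t [t_ge0 tT]].
  have Is : Ico0 T s by split=> //; exact: le_lt_trans tT.
  have It : Ico0 T t by split=> //; exact: le_trans st.
  by rewrite !PsiE // !enorm_sqr Z'_mono.
rewrite PsiE // enorm_sqr; split=> //.
apply: le_trans (Z'_mono 0 t (lexx 0) t_ge0 tT) _.
rewrite Z'E // X'E // Z0E X0E subr0 oppr0 sub0r -scaleN1r !(edotZl, edotZr).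
by rewrite enorm_sqr -exprVn expr2; lra.
Qed.
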